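(* Let $P$ be a tree poset and $q$ a positive integer. Then $$M^*(n,q,P)\le\sum_{\mathrm{r}}\prod_{xy\in H(P)}n^{|\mathrm{r}(x)-\mathrm{r}(y)|}\cdot\binom{n}{\lfloor n/2\rfloor},$$ where the sum ranges over all poset homomorphisms $\mathrm{r}:P\to[q]$.
   Context: $\mathcal{B}_n$ is the family of subsets of $[n]$. A tree poset is a finite poset whose Hasse diagram is a tree. $M^*(n,q,P)$ is the number of induced copies of $P$ (injective maps $f$ into the family with $f(x)\subsetneq f(y)$ iff $x<_P y$) in the $q$ middle levels of $\mathcal{B}_n$, i.e. the $q$ consecutive layers $\{F:|F|=j\}$ closest to $n/2$. $H(P)$ is the directed Hasse diagram of $P$ (edge $xy$ when $y$ covers $x$). $[q]$ carries the reverse of the natural order, so a poset homomorphism $\mathrm{r}:P\to[q]$ satisfies $x<_P y\Rightarrow\mathrm{r}(x)>\mathrm{r}(y)$. *)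

From HB Require Import structures.
From mathcomp Require Import all_boot all_order.
Set Implicit Arguments. Unset Strict Implicit. Unset Printing Implicit Defensive.
Import Order.Theory.

Definition covers {d : Order.disp_t} {T : finPOrderType d} (x y : T) : bool :=
  ((x < y)%O && [forall z : T, ~~ ((x < z)%O && (z < y)%O)]).

Definition hasse_adj {d : Order.disp_t} {T : finPOrderType d} : rel T :=
  fun x y => covers x y || covers y x.

Definition tree_poset {d : Order.disp_t} (T : finPOrderType d) : Prop :=
  [/\ 0 < #|T|,
      (forall x y : T, connect hasse_adj x y) &
      ~ (exists c : seq T, [&& uniq c, 3 <= size c & cycle hasse_adj c])].

Definition distnat (a b : nat) : nat := (a - b) + (b - a).

(* The q middle levels of B_n: the q consecutive levels j (0 <= j <= n)
   closest to n/2, namely (n+1-q)/2 <= j <= (n+1-q)/2 + q - 1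
   (all levels if q > n + 1). *)
Definition mid_low (n q : nat) : nat := (n.+1 - q)./2.
Definition in_middle (n q : nat) (F : {set 'I_n}) : bool :=
  (mid_low n q <= #|F|) && (#|F| <= mid_low n q + q - 1).

Arguments in_middle : clear implicits.
(* M^*(n,q,P): number of induced copies of P in the q middle levels. *)
Definition Mstar (n q : nat) {d : Order.disp_t} (T : finPOrderType d) : nat :=
  #|[set f : {ffun T -> {set 'I_n}} |
      [&& injectiveb f,
          [forall x, in_middle n q (f x)] &
          [forall x, forall y, (f x \proper f y) == (x < y)%O]]]|.

(* poset homomorphism r : P -> [q], [q] carrying the reverse of the
   natural order: x <_P y -> r x > r y (here [q] = {0,...,q-1}). *)
Definition rank_hom {d : Order.disp_t} {T : finPOrderType d} (q : nat)
  (r : {ffun T -> 'I_q}) : bool :=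
  [forall x, forall y, (x < y)%O ==> (r y < r x)%N].

From HB Require Import structures.
From mathcomp Require Import all_boot all_order zify.

(* Group the induced copies f by their level rank r x = top - #|f x|, which
   is a homomorphism from P to [q] with the reversed order.  Fix a root and a
   spanning tree of the Hasse diagram, given by a parent map.  A copy of rank
   r is determined by f root, one of at most 'C(n, n./2) sets of a middle
   size, and by the symmetric differences f x (+) f (parent x): as x and
   parent x are comparable, such a difference has exactly
   |r x - r (parent x)| elements, hence at most n ^ |r x - r (parent x)|
   choices.  Tree edges are covering pairs, and the remaining factors of the
   product over H(P) are at least 1 as soon as some copy exists, since then
   n > 0. *)

Set Implicit Arguments.
Unset Strict Implicit.
Unset Printing Implicit Defensive.

Lemma bin_leq_exp n k : 'C(n, k) <= n ^ k.
Proof.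
apply: leq_trans (leq_pmulr _ (fact_gt0 k)) _.
rewrite bin_ffact ffact_prod -[k in n ^ k]card_ord -prod_nat_const.
by apply: leq_prod => i _; apply: leq_subr.
Qed.

Lemma bin_leq_half n k : 'C(n, k) <= 'C(n, n./2).
Proof.
have n_halves := odd_double_half n; rewrite -muln2 in n_halves.
have bin_mono : {in [pred i | i <= n./2] &, {homo binomial n : i j / i <= j}}.
  apply: homo_leq_in => [i | j i l | i j _ le_j_half m /andP[_ lt_mj] | i _].
  - exact: leqnn.
  - exact: leq_trans.
  - exact: leq_trans (ltnW lt_mj) le_j_half.
  rewrite inE => lt_i_half.
  by rewrite -(@leq_pmul2l i.+1) // mul_bin_left leq_mul2r; apply/orP; right; lia.
have [le_k_half | lt_half_k] := leqP k n./2; first by apply: bin_mono; rewrite ?inE.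
have [le_kn | lt_nk] := leqP k n; last by rewrite bin_small.
by rewrite -bin_sub //; apply: bin_mono; rewrite ?inE; lia.
Qed.

Lemma subset_leq_prod (I : finType) (A B : {set I}) (F : I -> nat) :
  A \subset B -> {in B, forall i, 0 < F i} ->
  \prod_(i in A) F i <= \prod_(i in B) F i.
Proof.
move=> sAB F_gt0; rewrite [X in _ <= X](big_setID A) /= (setIidPr sAB).
by rewrite leq_pmulr // prodn_cond_gt0 // => i /setDP[+ _]; apply: F_gt0.
Qed.

Definition symdiff (T : finType) (A B : {set T}) : {set T} :=
  [set i | (i \in A) (+) (i \in B)].

Lemma symdiffKr (T : finType) (A B : {set T}) : symdiff (symdiff A B) B = A.
Proof. by apply/setP=> i; rewrite !inE; case: (i \in A); case: (i \in B). Qed.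

Lemma symdiffC (T : finType) (A B : {set T}) : symdiff A B = symdiff B A.
Proof. by apply/setP=> i; rewrite !inE addbC. Qed.

Lemma card_symdiff_sub (T : finType) (A B : {set T}) :
  A \subset B -> #|symdiff A B| = #|B| - #|A|.
Proof.
move=> sAB; rewrite -cardsDS //; apply: eq_card => i; rewrite !inE.
by case: (boolP (i \in A)) => [/(subsetP sAB) ->|].
Qed.

Section RootedSpanningTree.

Variables (T : finType) (e : rel T) (root : T).
Hypothesis connected_to_root : forall x, connect e x root.

Fixpoint reach_root k x : bool :=
  if k is k'.+1 then [exists y, e x y && reach_root k' y] else x == root.

Lemma reach_root_path x s :
  path e x s -> last x s = root -> reach_root (size s) x.
Proof.
elim: s x => [|y s IHs] x /=; first by move=> _ ->.
by case/andP=> exy pys lst; apply/existsP; exists y; rewrite exy IHs.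
Qed.

Lemma reach_root_exists x : exists k, reach_root k x.
Proof.
have /connectP[s pxs lst] := connected_to_root x.
by exists (size s); apply: reach_root_path pxs (esym lst).
Qed.

Definition depth x := ex_minn (reach_root_exists x).

Definition parent x := odflt x [pick y | e x y && reach_root (depth x).-1 y].

Lemma reach_root_depth x : reach_root (depth x) x.
Proof. by rewrite /depth; case: ex_minnP. Qed.

Lemma depth_min x k : reach_root k x -> depth x <= k.
Proof. by rewrite /depth; case: ex_minnP => m _; apply. Qed.

Lemma parent_root : parent root = root.
Proof.
have depth_root : depth root = 0 by apply/eqP; rewrite -leqn0 depth_min /=.
by rewrite /parent depth_root; case: pickP => [y /andP[_ /eqP]|].
Qed.

Lemma parentP x : x != root -> e x (parent x) /\ depth (parent x) < depth x.
Proof.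
move=> x_nroot; have := reach_root_depth x; rewrite /parent.
case: (depth x) => [/eqP x_root | k /existsP[y exy]].
  by rewrite x_root eqxx in x_nroot.
case: pickP => [z /andP[exz reach_z] | /(_ y)]; last by rewrite exy.
by split; rewrite // ltnS depth_min.
Qed.

Lemma parent_ind (Q : T -> Prop) :
  Q root -> (forall x, x != root -> Q (parent x) -> Q x) -> forall x, Q x.
Proof.
move=> Q_root Q_parent x; have [m] := ubnP (depth x); elim: m x => // m IHm x lt_xm.
have [-> // | x_nroot] := eqVneq x root.
have [_ lt_px] := parentP x_nroot.
exact: Q_parent x_nroot (IHm _ (leq_trans lt_px lt_xm)).
Qed.

Lemma prod_parent_leq_prod_edges (c : rel T) (w : T -> T -> nat) :
    (forall x y, e x y -> c x y || c y x) -> (forall x y, w x y = w y x) ->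
    (forall x y, c x y -> 0 < w x y) ->
  \prod_(x | x != root) w x (parent x) <= \prod_x \prod_(y | c x y) w x y.
Proof.
move=> e_c wC w_gt0; pose nonroot := [set x | x != root].
pose edge x := if c x (parent x) then (x, parent x) else (parent x, x).
have no_2cycle x y : x != root -> y != root -> parent x = y -> parent y != x.
  move=> /parentP[_ lt_x] /parentP[_ lt_y] pxy; apply/eqP=> pyx.
  rewrite pxy in lt_x; rewrite pyx in lt_y.
  by have := ltn_trans lt_y lt_x; rewrite ltnn.
have edge_inj : {in nonroot &, injective edge}.
  move=> x y /[!inE] x_nroot y_nroot; rewrite /edge.
  case: ifP; case: ifP => _ _ [] // E1 E2.
  - by have := no_2cycle _ _ x_nroot y_nroot E2; rewrite -E1 eqxx.
  - by have := no_2cycle _ _ x_nroot y_nroot E1; rewrite -E2 eqxx.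
have edge_c : edge @: nonroot \subset [set p | c p.1 p.2].
  apply/subsetP=> _ /imsetP[x + ->]; rewrite !inE => /parentP[/e_c c_x _]; rewrite /edge.
  by case: ifP c_x => /= ? ?.
have -> : \prod_(x | x != root) w x (parent x) = \prod_(p in edge @: nonroot) w p.1 p.2.
  rewrite big_imset //=; apply: eq_big => [x | x _]; first by rewrite inE.
  by rewrite /edge; case: ifP => //= _; rewrite wC.
rewrite pair_big_dep /=; apply: leq_trans (subset_leq_prod edge_c _) _.
  by move=> [x y] /[!inE] /w_gt0.
by apply: eq_leq; apply: eq_bigl => p; rewrite inE.
Qed.

Lemma leq_card_by_parent_symdiff n (F : {set {ffun T -> {set 'I_n}}})
    k0 (k : T -> nat) :
    (forall f, f \in F -> #|f root| = k0) ->
    (forall f x, f \in F -> #|symdiff (f x) (f (parent x))| = k x) ->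
  #|F| <= 'C(n, k0) * \prod_x 'C(n, k x).
Proof.
move=> F_root F_step.
pose code (f : {ffun T -> {set 'I_n}}) :=
  (f root, [ffun x => symdiff (f x) (f (parent x))]).
have code_inj : injective code.
  move=> f g [eq_root /ffunP eq_step]; apply/ffunP; apply: parent_ind => // x _ eq_parent.
  have := eq_step x; rewrite !ffunE eq_parent => eq_symdiff.
  by rewrite -(symdiffKr (f x) (g (parent x))) eq_symdiff symdiffKr.
pose sized m := [set A : {set 'I_n} | #|A| == m].
have code_sized : code @: F \subset setX (sized k0) (setXn (fun x => sized (k x))).
  apply/subsetP=> _ /imsetP[f f_F ->]; rewrite inE /= !inE F_root // eqxx.
  by apply/forallP=> x; rewrite !inE ffunE F_step.
rewrite -(card_imset F code_inj); apply: leq_trans (subset_leq_card code_sized) _.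
rewrite cardsX cardsXn !card_draws card_ord.
by under eq_bigr do rewrite card_draws card_ord.
Qed.

End RootedSpanningTree.

Lemma distnatC a b : distnat a b = distnat b a.
Proof. exact: addnC. Qed.

Section InducedCopies.

Variables (d : Order.disp_t) (P : finPOrderType d) (n q : nat).

Definition induced_copies : {set {ffun P -> {set 'I_n}}} :=
  [set f : {ffun P -> {set 'I_n}} |
      [&& injectiveb f,
          [forall x, in_middle n q.+1 (f x)] &
          [forall x, forall y, (f x \proper f y) == (x < y)%O]]].

Lemma card_induced_copies : Mstar n q.+1 P = #|induced_copies|.
Proof. by []. Qed.

Definition top_level := mid_low n q.+1 + q.

Definition level_rank (f : {ffun P -> {set 'I_n}}) : {ffun P -> 'I_q.+1} :=
  [ffun x => inord (top_level - #|f x|)].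

Section OneCopy.

Variable f : {ffun P -> {set 'I_n}}.
Hypothesis f_copy : f \in induced_copies.

Lemma induced_copy_middle (x : P) : mid_low n q.+1 <= #|f x| <= top_level.
Proof.
move: f_copy; rewrite inE => /and3P[_ /forallP/(_ x) + _].
by rewrite /in_middle /top_level addnS subn1.
Qed.

Lemma induced_copy_proper (x y : P) : (x < y)%O -> f x \proper f y.
Proof.
by move: f_copy; rewrite inE => /and3P[_ _ /forallP/(_ x)/forallP/(_ y)/eqP ->].
Qed.

Lemma induced_copy_dim_gt0 (x y : P) : (x < y)%O -> 0 < n.
Proof.
move=> /induced_copy_proper/proper_card lt_xy.
by rewrite -[n]card_ord (leq_ltn_trans (leq0n _) (leq_trans lt_xy (max_card _))).
Qed.

Lemma level_rankE x : level_rank f x = top_level - #|f x| :> nat.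
Proof.
rewrite ffunE inordK //; have := induced_copy_middle x; rewrite /top_level; lia.
Qed.

Lemma card_level_rank x : #|f x| = top_level - level_rank f x.
Proof. by rewrite level_rankE subKn //; case/andP: (induced_copy_middle x). Qed.

Lemma level_rank_hom : rank_hom (level_rank f).
Proof.
apply/forallP=> x; apply/forallP=> y; apply/implyP=> lt_xy; rewrite !level_rankE.
have := proper_card (induced_copy_proper lt_xy); have := induced_copy_middle y; lia.
Qed.

Lemma card_symdiff_adj (x y : P) : hasse_adj x y ->
  #|symdiff (f x) (f y)| = distnat (level_rank f x) (level_rank f y).
Proof.
move=> adj_xy; wlog cov_xy : x y adj_xy / covers x y.
  move=> wlog_cov; case/orP: (adj_xy) => [|cov_yx]; first exact: wlog_cov.
  by rewrite symdiffC distnatC wlog_cov // /hasse_adj cov_yx.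
case/andP: cov_xy => /induced_copy_proper sub_xy _.
rewrite card_symdiff_sub ?proper_sub // !level_rankE /distnat.
have := proper_card sub_xy; have := induced_copy_middle y; lia.
Qed.

End OneCopy.

Variable root : P.
Hypothesis connected : forall x, connect hasse_adj x root.

Lemma card_level_fiber (r : {ffun P -> 'I_q.+1}) :
  #|[set f in induced_copies | level_rank f == r]| <=
  'C(n, n./2) * \prod_x \prod_(y | covers x y) n ^ distnat (r x) (r y).
Proof.
set fiber := [set f in _ | _].
have [-> | [f f_fiber]] := set_0Vmem fiber; first by rewrite cards0.
have in_fiber g : g \in fiber -> g \in induced_copies /\ level_rank g = r.
  by rewrite inE => /andP[? /eqP].
have [f_copy _] := in_fiber f f_fiber.
pose k x := distnat (r x) (r (parent connected x)).
apply: leq_trans (leq_card_by_parent_symdiff (connected_to_root := connected)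
                   (k0 := top_level - r root) (k := k) _ _) _.
- by move=> g /in_fiber[g_copy <-]; apply: card_level_rank.
- move=> g x /in_fiber[g_copy rank_g]; rewrite /k -rank_g.
  have [-> | x_nroot] := eqVneq x root.
    by rewrite parent_root card_symdiff_sub // /distnat !subnn.
  by apply: card_symdiff_adj => //; case: (parentP connected x_nroot).
apply: leq_mul; first exact: bin_leq_half.
rewrite (bigD1 root) //= /k parent_root /distnat subnn bin0 mul1n.
apply: leq_trans (leq_prod (fun x _ => bin_leq_exp _ _)) _.
apply: (prod_parent_leq_prod_edges connected (c := covers)
          (w := fun x y => n ^ distnat (r x) (r y))).
- by [].
- by move=> x y; rewrite distnatC.
- by move=> x y /andP[lt_xy _]; rewrite expn_gt0 (induced_copy_dim_gt0 f_copy lt_xy).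
Qed.

End InducedCopies.

Theorem lemma5p4 (d : Order.disp_t) (P : finPOrderType d) (q n : nat) :
  tree_poset P -> 0 < q ->
  Mstar n q P <=
    (\sum_(r : {ffun P -> 'I_q} | rank_hom r)
        \prod_(x : P) \prod_(y : P | covers x y) n ^ distnat (r x) (r y))
    * 'C(n, n./2).
Proof.
case=> P_gt0 P_connected _; case: q => // q _.
have [root _] := card_gt0P P_gt0.
rewrite card_induced_copies -sum1_card.
rewrite (partition_big (@level_rank _ P n q) (@rank_hom _ P q.+1)) /=;
  last exact: level_rank_hom.
rewrite big_distrl /=; apply: leq_sum => r _; rewrite sum1dep_card mulnC.
exact: (card_level_fiber (q := q) n (P_connected^~ root) r).
Qed.
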